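(* Let $X=(X_1,\dots,X_p)$ be a jointly continuous random vector in $\mathbb{R}^p$ and let $a_1,\dots,a_{\mathcal{R}}$ be rationally independent real numbers. Let $\mathcal{L}=\{X_ia_j:1\le i\le p,1\le j\le\mathcal{R}\}$ (viewed as a family of $p\mathcal{R}$ reals). Then $$\mathbb{P}(\mathcal{L}\text{ is rationally independent})=1.$$
   Context: A random vector in $\mathbb{R}^p$ is jointly continuous if it has a joint density with respect to Lebesgue measure. A finite family of reals $(x_k)$ is rationally independent if $\sum_kq_kx_k=0$ with $q_k\in\mathbb{Q}$ implies all $q_k=0$. *)

From HB Require Import structures.
From mathcomp Require Import all_boot all_order all_algebra.
From mathcomp Require Import all_classical all_reals all_analysis.
Set Implicit Arguments. Unset Strict Implicit. Unset Printing Implicit Defensive.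
Import Order.TTheory GRing.Theory Num.Theory.
Local Open Scope classical_set_scope.
Local Open Scope ring_scope.

Section defs.
Variable R : realType.

(* Integral over R^n (n-tuples of reals) with respect to the n-dimensional
   Lebesgue measure, written as the iterated integral
   \int dx_1 \int dx_2 ... \int dx_n g(x_1,...,x_n)
   (for nonnegative measurable g this is the Lebesgue integral on R^n,
   by Tonelli). *)
Fixpoint lebesgue_integral_Rn (n : nat) : (n.-tuple R -> \bar R) -> \bar R :=
  match n with
  | 0 => fun g => g [tuple]
  | n'.+1 => fun g =>
      (\int[@lebesgue_measure R]_x
         lebesgue_integral_Rn (fun t : n'.-tuple R => g (cons_tuple x t)))%E
  end.

Definition rationally_independent (I : finType) (x : I -> R) : Prop :=
  forall q : I -> rat, \sum_(k : I) ratr (q k) * x k = 0 -> forall k, q k = 0.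

End defs.

Definition random_vector (d : measure_display) (T : measurableType d)
  (R : realType) (P : probability T R) (p : nat)
  (X : 'I_p -> {RV P >-> R}) : T -> p.-tuple R :=
  fun w => [tuple X i w | i < p].

Definition jointly_continuous (d : measure_display) (T : measurableType d)
  (R : realType) (P : probability T R) (p : nat)
  (X : 'I_p -> {RV P >-> R}) : Prop :=
  exists f : p.-tuple R -> R,
    [/\ measurable_fun [set: p.-tuple R] f,
        (forall t, 0 <= f t) &
        forall A : set (p.-tuple R), measurable A ->
          P (random_vector X @^-1` A) =
          lebesgue_integral_Rn (fun t => ((\1_A t) * f t)%:E)].

From HB Require Import structures.
From mathcomp Require Import all_boot all_order all_algebra.
From mathcomp Require Import all_classical all_reals all_analysis.
From mathcomp Require Import measurable_realfun.
Set Implicit Arguments. Unset Strict Implicit. Unset Printing Implicit Defensive.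
Import Order.TTheory GRing.Theory Num.Theory.
Local Open Scope classical_set_scope.
Local Open Scope ring_scope.

(* The event that the family is rationally dependent is the countable union,
   over nonzero rational arrays (q_ij), of the events sum_ij q_ij X_i a_j = 0.
   Such an event is {sum_i c_i X_i = 0} with c_i = sum_j q_ij a_j, and the
   rational independence of the a_j makes some c_i nonzero; it is thus the
   preimage under X of a hyperplane of R^p, which is Lebesgue-null, so it has
   probability zero because X has a density. *)

Section lebesgue_integral_Rn_null.
Variable R : realType.

Lemma lebesgue_integral_Rn_eq0 n (g : n.-tuple R -> \bar R) :
  (forall t, g t = 0%E) -> lebesgue_integral_Rn g = 0%E.
Proof.
elim: n g => [|n IH] g g0 /=; first exact: g0.
by apply: integral0_eq => x _; apply: IH => t.
Qed.

Lemma lebesgue_integral_eq0_off_point (f : R -> \bar R) (x0 : R) :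
  (forall x, x != x0 -> f x = 0%E) -> (\int[@lebesgue_measure R]_x f x = 0)%E.
Proof.
move=> f0; have mD : measurable ([set: R] `\ x0) by exact: measurableD.
rewrite -(integral_setD1 mD); last first.
  have f0D : {in [set: R] `\ x0, cst 0%E =1 f}.
    by move=> x; rewrite inE => -[_ /eqP /f0].
  exact: eq_measurable_fun f0D (measurable_cst _).
by apply: integral0_eq => x [_ /eqP /f0].
Qed.

Lemma lebesgue_integral_Rn_hyperplane n (c : 'I_n -> R) (b : R)
    (g : n.-tuple R -> \bar R) :
  (exists i, c i != 0) ->
  (forall t, \sum_i c i * tnth t i != b -> g t = 0%E) ->
  lebesgue_integral_Rn g = 0%E.
Proof.
elim: n c b g => [|n IH] c b g [i ci] gH; first by case: i ci.
have expand x t : \sum_i c i * tnth (cons_tuple x t) i =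
    c ord0 * x + \sum_j c (lift ord0 j) * tnth t j.
  by rewrite big_ord_recl tnth0; under eq_bigr do rewrite tnthS.
have [[j cj]|tail0] := pselect (exists j, c (lift ord0 j) != 0).
  apply: integral0_eq => x _.
  apply: (IH (c \o lift ord0) (b - c ord0 * x)); first by exists j.
  move=> t Ht; apply: gH; rewrite expand.
  by apply: contra Ht => /eqP <-; rewrite addrC addKr.
have {}tail0 k : c (lift ord0 k) = 0.
  by apply: contra_notP tail0 => /eqP ck; exists k.
have c0 : c ord0 != 0.
  by case: (unliftP ord0 i) ci => [k ->|->] //; rewrite tail0 eqxx.
apply: (lebesgue_integral_eq0_off_point (x0 := b / c ord0)) => x xb.
apply: lebesgue_integral_Rn_eq0 => t; apply: gH.
rewrite expand big1 ?addr0 => [|k _]; last by rewrite tail0 mul0r.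
by apply: contra xb => /eqP <-; rewrite mulrC mulKf.
Qed.

End lebesgue_integral_Rn_null.

Lemma measurable_lincomb_eq0 d (T : measurableType d) (R : realType)
    (I : finType) (c : I -> R) (Y : I -> T -> R) :
  (forall i, measurable_fun setT (Y i)) ->
  measurable [set w | \sum_i c i * Y i w = 0].
Proof.
move=> mY; rewrite -[X in measurable X]setTI.
have msum : measurable_fun setT (fun w => \sum_i c i * Y i w).
  by apply: measurable_sum => i; exact/measurable_funM/mY.
exact: msum measurableT _ (measurable_set1 0).
Qed.

Lemma negligible_bigcup_countType d (T : sigmaRingType d) (R : realFieldType)
    (mu : {measure set T -> \bar R}) (U : countType) (F : U -> set T) :
  (forall u, mu.-negligible (F u)) -> mu.-negligible (\bigcup_u F u).
Proof.
move=> Fnull; pose G n := if unpickle n is Some u then F u else set0.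
apply: (@negligibleS _ _ _ _ (\bigcup_n G n)).
  by move=> w [u _ Fw]; exists (pickle u) => //; rewrite /G pickleK.
apply: negligible_bigcup => n; rewrite /G.
by case: unpickle => [u|]; [exact: Fnull | exact: negligible_set0].
Qed.

Lemma rationally_independent_almost_surely d (T : measurableType d)
    (R : realType) (P : probability T R) (I : finType) (Y : I -> T -> R) :
  (forall i, measurable_fun setT (Y i)) ->
  (forall q : I -> rat, (exists k, q k != 0) ->
     P [set w | \sum_k ratr (q k) * Y k w = 0] = 0%E) ->
  P [set w | rationally_independent (fun k => Y k w)] = 1%E.
Proof.
move=> mY Pnull.
pose E (q : {ffun I -> rat}) :=
  if q == 0 then set0 else [set w | \sum_k ratr (q k) * Y k w = 0].
have mE q : measurable (E q).
  rewrite /E; case: eqP => _; first exact: measurable0.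
  exact: measurable_lincomb_eq0.
have Enull q : P.-negligible (E q).
  rewrite /E; case: eqP => [_|q0]; first exact: negligible_set0.
  apply/negligibleP; first exact: measurable_lincomb_eq0.
  apply: Pnull; apply: contra_notP q0 => allq0; apply/ffunP => k; rewrite ffunE.
  by apply: contra_notP allq0 => /eqP qk; exists k.
have -> : [set w | rationally_independent (fun k => Y k w)] = ~` \bigcup_q E q.
  apply/seteqP; split=> w /=.
    move=> indep [q _]; rewrite /E; case: eqP => // /eqP q0 rel.
    by move/negP: q0; apply; apply/eqP/ffunP => k; rewrite ffunE (indep _ rel).
  move=> noE q rel k; apply: contra_notP noE => qk; exists (finfun q) => //.
  rewrite /E; case: eqP => [/ffunP/(_ k)|_ /=]; first by rewrite !ffunE.
  by under eq_bigr do rewrite ffunE.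
have mU : measurable (\bigcup_q E q).
  by apply: countable_bigcupT_measurable => //; exact: countableP.
rewrite probability_setC // (negligibleP _ mU).1 ?sube0 //.
exact: negligible_bigcup_countType.
Qed.

Lemma jointly_continuous_hyperplane_null d (T : measurableType d)
    (R : realType) (P : probability T R) (p : nat) (X : 'I_p -> {RV P >-> R})
    (c : 'I_p -> R) :
  jointly_continuous X -> (exists i, c i != 0) ->
  P [set w | \sum_i c i * X i w = 0] = 0%E.
Proof.
move=> [f [_ _ hf]] c_neq0.
have mH : measurable [set t : p.-tuple R | \sum_i c i * tnth t i = 0].
  by apply: measurable_lincomb_eq0 => i; exact: measurable_tnth.
have -> : [set w | \sum_i c i * X i w = 0] =
    random_vector X @^-1` [set t | \sum_i c i * tnth t i = 0].
  by apply: eq_set => w /=; under [in RHS]eq_bigr do rewrite tnth_mktuple.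
rewrite hf //; apply: (lebesgue_integral_Rn_hyperplane (b := 0) c_neq0) => t Ht.
by rewrite indicE memNset ?mul0r // => /eqP; rewrite (negbTE Ht).
Qed.

Lemma sum_ratr_pair_mul (R : fieldType) (I J : finType) (q : I * J -> rat)
    (x : I -> R) (a : J -> R) :
  \sum_(k : I * J) ratr (q k) * (x k.1 * a k.2) =
  \sum_i (\sum_j ratr (q (i, j)) * a j) * x i.
Proof.
rewrite (eq_bigr (fun k => ratr (q (k.1, k.2)) * (x k.1 * a k.2))); last by case.
rewrite -(pair_bigA _ (fun i j => ratr (q (i, j)) * (x i * a j))).
apply: eq_bigr => i _; rewrite mulr_suml; apply: eq_bigr => j _.
by rewrite mulrA mulrAC.
Qed.

Lemma rationally_independent_row_sum_neq0 (R : realType) (I J : finType)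
    (a : J -> R) (q : I * J -> rat) :
  rationally_independent a -> (exists k, q k != 0) ->
  exists i, \sum_j ratr (q (i, j)) * a j != 0.
Proof.
move=> ha [[i j] qij]; exists i; apply/eqP => rel.
by move: qij; rewrite (ha _ rel j) eqxx.
Qed.

Theorem lemma5 (d : measure_display) (T : measurableType d) (R : realType)
  (P : probability T R) (p r : nat) (X : 'I_p -> {RV P >-> R}) (a : 'I_r -> R) :
  jointly_continuous X ->
  rationally_independent a ->
  P [set w | rationally_independent
               (fun ij : 'I_p * 'I_r => X ij.1 w * a ij.2)] = 1%E.
Proof.
move=> hX ha; apply: rationally_independent_almost_surely => [k|q q_neq0].
  exact/measurable_funM/measurable_cst/measurable_funP.
under eq_set => w do rewrite (sum_ratr_pair_mul q (fun i => X i w)).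
apply: jointly_continuous_hyperplane_null hX _.
exact: rationally_independent_row_sum_neq0.
Qed.
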